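(* Fix $n\ge0$. For every formula $\phi\in\mathcal{L}^1$ and label $w$, every labelled sequent generated during the computation of $\mathtt{Prove_n}(w:\phi)$ is forestlike.
   Context: Single-agent setting: $Ag=\{1\}$. Formulas $\phi ::= p \mid \overline{p} \mid (\phi\wedge\phi) \mid (\phi\vee\phi) \mid \Box\phi \mid \Diamond\phi \mid [1]\phi \mid \langle 1\rangle\phi$; $\overline{\phi}$ swaps $p/\overline{p}$, $\wedge/\vee$, $\Box/\Diamond$, $[1]/\langle 1\rangle$. A labelled sequent $\mathcal{R},\Gamma$ consists of relational atoms $\mathcal{R}_1xy$ and labelled formulas $x:\phi$. Graphs. The graph $G(\Lambda)$ of a sequent $\Lambda$ has the labels of $\Lambda$ as vertices and a directed edge $(x,y)$ for each $\mathcal{R}_1xy\in\Lambda$; each vertex $x$ is labelled by the formulas $\phi$ with $x:\phi\in\Lambda$. A graph is a tree iff there is a node (root) with exactly one directed path to every other node; a forest is a disjoint union of trees. $\Lambda$ is forestlike iff $G(\Lambda)$ is a forest; each tree of it is a choice-tree, and $CT(w)$ denotes the choice-tree containing label $w$. For a forestlike $\Lambda$ and label $w$: $w$ is saturated iff (i) $w:\phi\in\Lambda$ implies $w:\overline{\phi}\notin\Lambda$, (ii) $w:\phi\vee\psi\in\Lambda$ implies $w:\phi\in\Lambda$ and $w:\psi\in\Lambda$, (iii) $w:\phi\wedge\psi\in\Lambda$ implies $w:\phi\in\Lambda$ or $w:\psi\in\Lambda$. $w$ is $\Box$-realized iff for each $w:\Box\phi\in\Lambda$ some label $u$ has $u:\phi\in\Lambda$;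 $[1]$-realized iff for each $w:[1]\phi\in\Lambda$ some $u$ in $CT(w)$ has $u:\phi\in\Lambda$; $\Diamond$-propagated iff for each $w:\Diamond\phi\in\Lambda$, $u:\phi\in\Lambda$ for all labels $u$ of $\Lambda$; $\langle1\rangle$-propagated iff for each $w:\langle1\rangle\phi\in\Lambda$, $u:\phi\in\Lambda$ for all $u$ in $CT(w)$. $\Lambda$ is $n$-choice consistent (for $n>0$) iff $G(\Lambda)$ has at most $n$ choice-trees. $\Lambda$ is stable iff all labels are saturated, $\Box$- and $[1]$-realized, $\Diamond$- and $\langle1\rangle$-propagated, and (when $n>0$) $\Lambda$ is $n$-choice consistent. Algorithm $\mathtt{Prove_n}(\mathcal{R},\Gamma)$ (returns true/false), steps tried in order: 1. If $\mathcal{R},\Gamma$ contains $w:p$ and $w:\overline{p}$ for some $w,p$, return true. 2. If $\mathcal{R},\Gamma$ is stable, return false. 3. If some label $w$ is not saturated: (i) if $w:\phi\vee\psi$ is present but $w:\phi$ or $w:\psi$ is absent, return $\mathtt{Prove_n}(\mathcal{R},w:\phi,w:\psi,\Gamma)$; (ii) if $w:\phi\wedge\psi$ is present but neither $w:\phi$ nor $w:\psi$ is, return false if $\mathtt{Prove_n}(\mathcal{R},w:\phi,\Gamma)$ or $\mathtt{Prove_n}(\mathcal{R},w:\psi,\Gamma)$ returns false, and true otherwise. 4. If some label $w$ is not $\langle1\rangle$-propagated, i.e. some $w:\langle1\rangle\phi$ is present and some $u$ in $CT(w)$ has $u:\phi$ absent, return $\mathtt{Prove_n}(\mathcal{R},u:\phi,\Gamma)$.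 5. If some $w$ is not $\Diamond$-propagated, i.e. some $w:\Diamond\phi$ is present and some label $u$ has $u:\phi$ absent, return $\mathtt{Prove_n}(\mathcal{R},u:\phi,\Gamma)$. 6. If some $w$ is not $[1]$-realized, i.e. some $w:[1]\phi$ is present with $u:\phi$ absent for every $u$ in $CT(w)$, return $\mathtt{Prove_n}(\mathcal{R},\mathcal{R}_1wv,v:\phi,\Gamma)$ with $v$ a fresh label. 7. If some $w$ is not $\Box$-realized, i.e. some $w:\Box\phi$ is present with $u:\phi$ absent for every label $u$, return $\mathtt{Prove_n}(\mathcal{R},v:\phi,\Gamma)$ with $v$ fresh. 8. (Only when $n>0$.) If $\mathcal{R},\Gamma$ is not $n$-choice consistent, pick distinct roots $w_0,\dots,w_n$ of choice-trees and, for each $0\le k\le n-1$, $k+1\le j\le n$, compute $\mathtt{Prove_n}(\mathcal{R},\mathcal{R}_1w_kw_j,\Gamma)$; return false if some call returns false, and true otherwise. For $n=0$ step 8 is absent and stability does not include $n$-choice consistency. *)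

From Stdlib Require Import List Relations Arith.
Import ListNotations.

(* Formulas of L^1 in negation normal form; [1] = Stit, <1> = CStit. *)
Inductive form : Type :=
| Var (p : nat) | NVar (p : nat)
| And (a b : form) | Or (a b : form)
| Box (a : form) | Dia (a : form)
| Stit (a : form) | CStit (a : form).

Fixpoint neg (f : form) : form :=
  match f with
  | Var p => NVar p | NVar p => Var p
  | And a b => Or (neg a) (neg b) | Or a b => And (neg a) (neg b)
  | Box a => Dia (neg a) | Dia a => Box (neg a)
  | Stit a => CStit (neg a) | CStit a => Stit (neg a)
  end.

Definition label := nat.

(* A labelled sequent R,Gamma: relational atoms R_1 x y (pairs (x,y)) and
   labelled formulas x:phi (pairs (x,phi)); lists are read as sets (membership). *)
Record sequent := Seq { rels : list (label * label); fmls : list (label * form) }.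

Definition edge (S : sequent) (x y : label) : Prop := In (x, y) (rels S).

Definition is_label (S : sequent) (x : label) : Prop :=
  (exists y, In (x, y) (rels S) \/ In (y, x) (rels S)) \/
  (exists f, In (x, f) (fmls S)).

(* weak (undirected) connectedness in G(S); u is in CT(w) iff is_label S u /\ ucon S w u *)
Definition ucon (S : sequent) : label -> label -> Prop :=
  clos_refl_sym_trans label (edge S).

(* directed walk x -> l_1 -> ... -> l_k = y  (l lists the vertices after x) *)
Fixpoint walk (S : sequent) (x : label) (l : list label) (y : label) : Prop :=
  match l with
  | [] => x = y
  | z :: l' => edge S x z /\ walk S z l' y
  end.

Definition unique_walk (S : sequent) (r u : label) : Prop :=
  (exists l, walk S r l u) /\
  (forall l1 l2, walk S r l1 u -> walk S r l2 u -> l1 = l2).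

Definition is_root (S : sequent) (r : label) : Prop :=
  is_label S r /\ forall u, ucon S r u -> u <> r -> unique_walk S r u.

Definition forestlike (S : sequent) : Prop :=
  forall x, is_label S x -> exists r, ucon S r x /\ is_root S r.

Definition choice_consistent (n : nat) (S : sequent) : Prop :=
  exists ws : list label, length ws <= n /\
    forall x, is_label S x -> exists w, In w ws /\ ucon S w x.

Definition saturated (S : sequent) (w : label) : Prop :=
  (forall f, In (w, f) (fmls S) -> ~ In (w, neg f) (fmls S)) /\
  (forall a b, In (w, Or a b) (fmls S) -> In (w, a) (fmls S) /\ In (w, b) (fmls S)) /\
  (forall a b, In (w, And a b) (fmls S) -> In (w, a) (fmls S) \/ In (w, b) (fmls S)).

Definition box_realized (S : sequent) (w : label) : Prop :=
  forall a, In (w, Box a) (fmls S) -> exists u, In (u, a) (fmls S).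

Definition stit_realized (S : sequent) (w : label) : Prop :=
  forall a, In (w, Stit a) (fmls S) -> exists u, ucon S w u /\ In (u, a) (fmls S).

Definition dia_propagated (S : sequent) (w : label) : Prop :=
  forall a, In (w, Dia a) (fmls S) -> forall u, is_label S u -> In (u, a) (fmls S).

Definition cstit_propagated (S : sequent) (w : label) : Prop :=
  forall a, In (w, CStit a) (fmls S) ->
    forall u, is_label S u -> ucon S w u -> In (u, a) (fmls S).

Definition stable (n : nat) (S : sequent) : Prop :=
  (forall w, is_label S w ->
     saturated S w /\ box_realized S w /\ stit_realized S w /\
     dia_propagated S w /\ cstit_propagated S w) /\
  (0 < n -> choice_consistent n S).

Definition clash (S : sequent) : Prop :=
  exists w p, In (w, Var p) (fmls S) /\ In (w, NVar p) (fmls S).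

(* applicability of steps 3..7 (existence of an instance) *)
Definition inst3 (S : sequent) : Prop :=
  (exists w a b, In (w, Or a b) (fmls S) /\
      (~ In (w, a) (fmls S) \/ ~ In (w, b) (fmls S))) \/
  (exists w a b, In (w, And a b) (fmls S) /\
      ~ In (w, a) (fmls S) /\ ~ In (w, b) (fmls S)).
Definition inst4 (S : sequent) : Prop :=
  exists w a u, In (w, CStit a) (fmls S) /\ is_label S u /\ ucon S w u /\
    ~ In (u, a) (fmls S).
Definition inst5 (S : sequent) : Prop :=
  exists w a u, In (w, Dia a) (fmls S) /\ is_label S u /\ ~ In (u, a) (fmls S).
Definition inst6 (S : sequent) : Prop :=
  exists w a, In (w, Stit a) (fmls S) /\
    forall u, is_label S u -> ucon S w u -> ~ In (u, a) (fmls S).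
Definition inst7 (S : sequent) : Prop :=
  exists w a, In (w, Box a) (fmls S) /\
    forall u, is_label S u -> ~ In (u, a) (fmls S).

Definition add_f (S : sequent) (l : list (label * form)) : sequent :=
  Seq (rels S) (l ++ fmls S).
Definition add_r (S : sequent) (e : label * label) : sequent :=
  Seq (e :: rels S) (fmls S).

(* gen_step n S S' : the computation of Prove_n(S) makes the recursive call Prove_n(S'). *)
Inductive gen_step (n : nat) : sequent -> sequent -> Prop :=
| step3_or : forall S w a b,
    ~ clash S -> ~ stable n S ->
    In (w, Or a b) (fmls S) -> (~ In (w, a) (fmls S) \/ ~ In (w, b) (fmls S)) ->
    gen_step n S (add_f S [(w, a); (w, b)])
| step3_and_l : forall S w a b,
    ~ clash S -> ~ stable n S ->
    In (w, And a b) (fmls S) -> ~ In (w, a) (fmls S) -> ~ In (w, b) (fmls S) ->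
    gen_step n S (add_f S [(w, a)])
| step3_and_r : forall S w a b,
    ~ clash S -> ~ stable n S ->
    In (w, And a b) (fmls S) -> ~ In (w, a) (fmls S) -> ~ In (w, b) (fmls S) ->
    gen_step n S (add_f S [(w, b)])
| step4 : forall S w a u,
    ~ clash S -> ~ stable n S -> ~ inst3 S ->
    In (w, CStit a) (fmls S) -> is_label S u -> ucon S w u -> ~ In (u, a) (fmls S) ->
    gen_step n S (add_f S [(u, a)])
| step5 : forall S w a u,
    ~ clash S -> ~ stable n S -> ~ inst3 S -> ~ inst4 S ->
    In (w, Dia a) (fmls S) -> is_label S u -> ~ In (u, a) (fmls S) ->
    gen_step n S (add_f S [(u, a)])
| step6 : forall S w a v,
    ~ clash S -> ~ stable n S -> ~ inst3 S -> ~ inst4 S -> ~ inst5 S ->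
    In (w, Stit a) (fmls S) ->
    (forall u, is_label S u -> ucon S w u -> ~ In (u, a) (fmls S)) ->
    ~ is_label S v ->
    gen_step n S (Seq ((w, v) :: rels S) ((v, a) :: fmls S))
| step7 : forall S w a v,
    ~ clash S -> ~ stable n S -> ~ inst3 S -> ~ inst4 S -> ~ inst5 S -> ~ inst6 S ->
    In (w, Box a) (fmls S) ->
    (forall u, is_label S u -> ~ In (u, a) (fmls S)) ->
    ~ is_label S v ->
    gen_step n S (add_f S [(v, a)])
| step8 : forall S (ws : list label) k j,
    0 < n ->
    ~ clash S -> ~ stable n S -> ~ inst3 S -> ~ inst4 S -> ~ inst5 S -> ~ inst6 S ->
    ~ inst7 S -> ~ choice_consistent n S ->
    length ws = Datatypes.S n -> NoDup ws -> (forall r, In r ws -> is_root S r) ->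
    k < j -> j <= n ->
    gen_step n S (add_r S (nth k ws 0, nth j ws 0)).

Definition generated (n : nat) (w : label) (phi : form) (S : sequent) : Prop :=
  clos_refl_trans sequent (gen_step n) (Seq [] [(w, phi)]) S.

From Stdlib Require Import List Relations Arith Lia.
Import ListNotations.

(* Every generated sequent satisfies a stronger invariant: each vertex has at
   most one parent, and each vertex is reached by a directed walk from a vertex
   without parent.  Only steps 6 and 8 add relational atoms: step 6 hangs a
   fresh leaf below an existing label, step 8 makes one root the child of
   another root, and neither can close a cycle or create a second parent.
   Under the invariant, walks from a parentless vertex are unique and reach
   exactly its weakly connected component, so every component is a tree. *)

Definition no_parent (S : sequent) (r : label) : Prop := forall p, ~ edge S p r.

Definition parent_unique (S : sequent) : Prop :=
  forall a a' b, edge S a b -> edge S a' b -> a = a'.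

Definition reachable (S : sequent) (r x : label) : Prop := exists l, walk S r l x.

(* The quantifier ranges over all of [label], not only over the labels of [S]:
   a number that does not occur in [S] is its own parentless vertex. *)
Definition rooted_forest (S : sequent) : Prop :=
  parent_unique S /\ forall x, exists r, no_parent S r /\ reachable S r x.

Lemma walk_mono (S S' : sequent) :
  (forall x y, edge S x y -> edge S' x y) ->
  forall l x y, walk S x l y -> walk S' x l y.
Proof.
  intros Hsub l. induction l as [|z l IH]; intros x y Hw; simpl in *; [exact Hw |].
  destruct Hw as [He Hw]. split; [exact (Hsub x z He) | exact (IH z y Hw)].
Qed.

Section Walks.

Variable S : sequent.

Lemma walk_app (l1 l2 : list label) (x y : label) :
  walk S x (l1 ++ l2) y <-> exists m, walk S x l1 m /\ walk S m l2 y.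
Proof.
  revert x; induction l1 as [|z l1 IH]; intros x; simpl.
  - split; [intros H; exists x; auto | intros [m [-> H]]; exact H].
  - rewrite IH. split.
    + intros [He [m [H1 H2]]]. eauto.
    + intros [m [[He H1] H2]]. eauto.
Qed.

Lemma walk_rcons (l : list label) (x p y : label) :
  walk S x l p -> edge S p y -> walk S x (l ++ [y]) y.
Proof. intros Hw He. apply walk_app. exists p. simpl. auto. Qed.

Lemma walk_last_edge (l : list label) (x y : label) :
  walk S x l y ->
  (l = [] /\ x = y) \/ exists l' p, l = l' ++ [y] /\ walk S x l' p /\ edge S p y.
Proof.
  revert y; induction l as [|z l _] using rev_ind; intros y Hw.
  - left. auto.
  - right. apply walk_app in Hw. destruct Hw as [m [Hw [He E]]]. simpl in E. subst. eauto.
Qed.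

Lemma walk_ucon (l : list label) (x y : label) : walk S x l y -> ucon S x y.
Proof.
  revert x; induction l as [|z l IH]; intros x Hw; simpl in Hw.
  - subst. apply rst_refl.
  - destruct Hw as [He Hw]. apply rst_trans with z; [apply rst_step | apply IH]; assumption.
Qed.

Lemma walk_into_no_parent (l : list label) (x r : label) :
  no_parent S r -> walk S x l r -> l = [] /\ x = r.
Proof.
  intros Hr Hw. destruct (walk_last_edge l x r Hw) as [H | [l' [p [_ [_ He]]]]].
  - exact H.
  - destruct (Hr p He).
Qed.

Hypothesis Huniq : parent_unique S.

Lemma reachable_edge_iff (r a b : label) :
  no_parent S r -> edge S a b -> (reachable S r a <-> reachable S r b).
Proof.
  intros Hr He. split.
  - intros [l Hw]. exists (l ++ [b]). eapply walk_rcons; eauto.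
  - intros [l Hw]. destruct (walk_last_edge l r b Hw) as [[_ ->] | [l' [p [_ [Hw' Hp]]]]].
    + destruct (Hr a He).
    + rewrite (Huniq a p b He Hp). exists l'. exact Hw'.
Qed.

Lemma reachable_ucon_iff (r a b : label) :
  no_parent S r -> ucon S a b -> (reachable S r a <-> reachable S r b).
Proof.
  intros Hr Hab. induction Hab as [a b He | | | ];
    [exact (reachable_edge_iff r a b Hr He) | tauto ..].
Qed.

Lemma walk_from_no_parent_unique (r u : label) (l1 l2 : list label) :
  no_parent S r -> walk S r l1 u -> walk S r l2 u -> l1 = l2.
Proof.
  intros Hr. revert u l2.
  induction l1 as [|z l1 IH] using rev_ind; intros u l2 H1 H2.
  - simpl in H1; subst u. symmetry. exact (proj1 (walk_into_no_parent l2 r r Hr H2)).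
  - apply walk_app in H1. destruct H1 as [m [H1 [He E]]]. simpl in E. subst u.
    destruct (walk_last_edge l2 r z H2) as [[_ ->] | [l2' [p [-> [H2' Hp]]]]].
    + destruct (Hr m He).
    + rewrite (Huniq m p z He Hp) in H1. f_equal. exact (IH p l2' H1 H2').
Qed.

End Walks.

Lemma rooted_forest_forestlike (S : sequent) : rooted_forest S -> forestlike S.
Proof.
  intros [Huniq Hreach] x Hx. destruct (Hreach x) as [r [Hr [l Hw]]].
  exists r. split; [exact (walk_ucon S l r x Hw) | split].
  - destruct l as [|z l]; simpl in Hw.
    + subst. exact Hx.
    + left. exists z. left. apply Hw.
  - intros u Hu _. split.
    + apply (reachable_ucon_iff S Huniq r r u Hr Hu). exists []. reflexivity.
    + intros l1 l2. exact (walk_from_no_parent_unique S Huniq r u l1 l2 Hr).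
Qed.

Lemma is_root_no_parent (S : sequent) (r : label) :
  rooted_forest S -> is_root S r -> no_parent S r.
Proof.
  intros [_ Hreach] [_ Hroot]. destruct (Hreach r) as [r' [Hr' [l Hw]]].
  destruct (Nat.eq_dec r' r) as [<- | Hne]; [exact Hr' |].
  assert (Hu : ucon S r r') by (apply rst_sym; exact (walk_ucon S l r' r Hw)).
  destruct (Hroot r' Hu Hne) as [[l' Hw'] _].
  destruct (walk_into_no_parent S l' r r' Hr' Hw') as [_ E]. congruence.
Qed.

Lemma rooted_forest_same_rels (S S' : sequent) :
  rels S' = rels S -> rooted_forest S -> rooted_forest S'.
Proof.
  intros E [Huniq Hreach].
  assert (Hedge : forall x y, edge S' x y <-> edge S x y) by (intros x y; unfold edge; rewrite E; tauto).
  split.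
  - intros a a' b Ha Ha'. apply Hedge in Ha, Ha'. exact (Huniq a a' b Ha Ha').
  - intros x. destruct (Hreach x) as [r [Hr [l Hw]]]. exists r. split.
    + intros p Hp. apply Hedge in Hp. exact (Hr p Hp).
    + exists l. refine (walk_mono S S' _ l r x Hw). intros a b. apply Hedge.
Qed.

Lemma edge_add_r (S : sequent) (e : label * label) (x y : label) :
  edge (add_r S e) x y <-> e = (x, y) \/ edge S x y.
Proof. reflexivity. Qed.

Lemma walk_add_r (S : sequent) (e : label * label) (l : list label) (x y : label) :
  walk S x l y -> walk (add_r S e) x l y.
Proof. apply walk_mono. intros a b Hab. apply edge_add_r. right. exact Hab. Qed.

Lemma no_parent_add_r (S : sequent) (a b r : label) :
  no_parent S r -> r <> b -> no_parent (add_r S (a, b)) r.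
Proof.
  intros Hr Hrb p Hp. apply edge_add_r in Hp as [E | Hp].
  - injection E. congruence.
  - exact (Hr p Hp).
Qed.

(* Hangs the tree rooted at [b] below [a]; [~ reachable S b a] rules out a cycle. *)
Lemma rooted_forest_graft (S : sequent) (a b : label) :
  rooted_forest S -> no_parent S b -> ~ reachable S b a ->
  rooted_forest (add_r S (a, b)).
Proof.
  intros [Huniq Hreach] Hb Hab. split.
  - intros x x' y Hx Hx'. apply edge_add_r in Hx, Hx'.
    destruct Hx as [E | Hx], Hx' as [E' | Hx'].
    + congruence.
    + injection E as -> ->. destruct (Hb x' Hx').
    + injection E' as -> ->. destruct (Hb x Hx).
    + exact (Huniq x x' y Hx Hx').
  - intros x. destruct (Hreach x) as [r [Hr [l Hw]]].
    destruct (Nat.eq_dec r b) as [-> | Hrb].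
    + destruct (Hreach a) as [r' [Hr' [l' Hw']]].
      assert (Hr'b : r' <> b) by (intros ->; apply Hab; exists l'; exact Hw').
      exists r'. split; [exact (no_parent_add_r S a b r' Hr' Hr'b) |].
      exists (l' ++ b :: l). apply walk_app. exists a. split.
      * exact (walk_add_r S (a, b) l' r' a Hw').
      * split; [apply edge_add_r; left; reflexivity | exact (walk_add_r S (a, b) l b x Hw)].
    + exists r. split; [exact (no_parent_add_r S a b r Hr Hrb) |].
      exists l. exact (walk_add_r S (a, b) l r x Hw).
Qed.

Lemma rooted_forest_add_leaf (S : sequent) (w v : label) :
  rooted_forest S -> is_label S w -> ~ is_label S v -> rooted_forest (add_r S (w, v)).
Proof.
  intros HS Hw Hv. apply rooted_forest_graft; [exact HS | |].
  - intros p Hp. apply Hv. left. exists p. right. exact Hp.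
  - intros [[|z l] Hwalk]; simpl in Hwalk.
    + subst. contradiction.
    + apply Hv. left. exists z. left. apply Hwalk.
Qed.

Lemma rooted_forest_join_roots (S : sequent) (r1 r2 : label) :
  rooted_forest S -> is_root S r1 -> is_root S r2 -> r1 <> r2 ->
  rooted_forest (add_r S (r1, r2)).
Proof.
  intros HS H1 H2 Hne. apply rooted_forest_graft; [exact HS | exact (is_root_no_parent S r2 HS H2) |].
  intros [l Hw]. apply Hne. symmetry.
  exact (proj2 (walk_into_no_parent S l r2 r1 (is_root_no_parent S r1 HS H1) Hw)).
Qed.

Lemma gen_step_rooted_forest (n : nat) (S0 S1 : sequent) :
  gen_step n S0 S1 -> rooted_forest S0 -> rooted_forest S1.
Proof.
  intros Hstep HS. destruct Hstep as
    [| | | | | S w a v _ _ _ _ _ Hwa _ Hv | | S ws k j _ _ _ _ _ _ _ _ _ Hlen Hdup Hroots Hkj Hjn];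
    try (apply (rooted_forest_same_rels S); [reflexivity | exact HS]).
  - apply (rooted_forest_same_rels (add_r S (w, v))); [reflexivity |].
    apply rooted_forest_add_leaf; [exact HS | right; exists (Stit a); exact Hwa | exact Hv].
  - apply rooted_forest_join_roots; [exact HS | apply Hroots, nth_In; lia .. |].
    intros E. apply (NoDup_nth ws 0) in E; [lia | exact Hdup | lia | lia].
Qed.

Lemma rooted_forest_initial (w : label) (phi : form) : rooted_forest (Seq [] [(w, phi)]).
Proof.
  split.
  - intros a a' b [].
  - intros x. exists x. split; [intros p [] | exists []; reflexivity].
Qed.

Theorem lemma4 : forall (n : nat) (phi : form) (w : label) (S : sequent),
  generated n w phi S -> forestlike S.
Proof.
  intros n phi w S Hgen. apply rooted_forest_forestlike.
  assert (Hinit := rooted_forest_initial w phi). revert Hinit.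
  induction Hgen as [S S' Hstep | S | S S' S'' _ IH1 _ IH2]; intros HS.
  - exact (gen_step_rooted_forest n S S' Hstep HS).
  - exact HS.
  - exact (IH2 (IH1 HS)).
Qed.
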